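(* Let $G_4=K_{3,3}$, drawn as a regular hexagon with vertices $u_1,\dots,u_6$ in cyclic order, whose edges are the six sides $u_iu_{i+1}$ (indices mod 6) and the three long diagonals $u_1u_4,u_2u_5,u_3u_6$. Let the dihedral group $D_6$ of order $12$ (the symmetry group of the hexagon) act on edge labellings of $G_4$ via its action on the edges. For $s\ge0$ let $\widetilde{h}(s)$ be the number of magic distinct labellings of $G_4$ with magic sum $s$ counted up to this $D_6$-action (i.e. the number of $D_6$-orbits). Then $\widetilde{h}(s)$ is divisible by $6$ for every $s$.
   Context: A magic labelling of a finite graph is an assignment of nonnegative integer labels to its edges such that for every vertex the sum of the labels of the incident edges equals the same number $s$ (the magic sum). A magic distinct labelling is a magic labelling whose labels are pairwise distinct. *)

From mathcomp Require Import all_boot all_order all_algebra all_fingroup.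
Set Implicit Arguments. Unset Strict Implicit. Unset Printing Implicit Defensive.

(* Vertices of the hexagon: u_1,...,u_6 are 0,...,5 : 'I_6, in cyclic order. *)
Definition V := 'I_6.

(* G_4 = K_{3,3}: u_i u_j is an edge iff i - j is odd, i.e. i - j = +-1
   (the six sides) or i - j = 3 (the three long diagonals). *)
Definition is_edge (e : {set V}) : bool :=
  [exists i : V, exists j : V, (e == [set i; j]) && odd (i + j)].

Definition E := {e : {set V} | is_edge e}.

Definition D6 : {set {perm V}} :=
  [set g : {perm V} | [exists k : V,
     [forall x : V, g x == (k + x)%R] || [forall x : V, g x == (k - x)%R]]].

(* Action of a vertex permutation on edges (for g in D6 the image of an
   edge is an edge; the default branch is never used for such g). *)
Definition edge_act (g : {perm V}) (e : E) : E := insubd e (g @: val e).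

(* Every label of a magic labelling with
   magic sum s is at most s (each edge is incident to a vertex), so such
   labellings are exactly the functions E -> 'I_(s.+1) below. *)
Definition lab (s : nat) := {ffun E -> 'I_s.+1}.

Definition magic (s : nat) (f : lab s) : bool :=
  [forall v : V, (\sum_(e : E | v \in val e) (f e : nat)) == s].

Definition distinct_labels (s : nat) (f : lab s) : bool := injectiveb f.

Definition magic_distinct (s : nat) (f : lab s) : bool :=
  magic f && distinct_labels f.

Definition orbitD6 (s : nat) (f : lab s) : {set lab s} :=
  [set [ffun e => f (edge_act g e)] | g in D6].

Definition htilde (s : nat) : nat :=
  #|[set orbitD6 f | f in [set f : lab s | magic_distinct f]]|.

From mathcomp Require Import all_boot all_order all_algebra all_fingroup.
Set Implicit Arguments. Unset Strict Implicit. Unset Printing Implicit Defensive.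
Import GRing.Theory.

(* The automorphism group Aut(K_{3,3}) (parity-preserving or parity-reversing
   permutations of the vertices, order 72) contains D_6 and acts freely on
   magic distinct labellings, because a permutation fixing every edge of
   K_{3,3} is trivial and a labelling with distinct labels is fixed only by
   permutations fixing every edge.  Counting the labellings along the orbits of
   both groups gives 12 * htilde(s) = 72 * (number of Aut(K_{3,3})-orbits), so
   6 divides htilde(s). *)

Lemma oddZ6D (x y : V) : odd (x + y)%R = odd x (+) odd y.
Proof. by rewrite /= odd_mod // oddD. Qed.

Lemma oddZ6N (x : V) : odd (- x)%R = odd x.
Proof. by rewrite /= odd_mod // oddB ?addFb // ltnW. Qed.

Definition Aut_K33 : {set {perm V}} :=
  [set g : {perm V} | [exists b : bool, [forall x, odd (g x) == b (+) odd x]]].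

Lemma Aut_K33P (g : {perm V}) :
  reflect (exists b, forall x, odd (g x) = b (+) odd x) (g \in Aut_K33).
Proof.
rewrite inE; apply: (iffP existsP) => [[b /forallP gb]|[b gb]]; exists b.
  by move=> x; apply/eqP.
by apply/forallP => x; rewrite gb.
Qed.

Lemma Aut_K33_group_set : group_set Aut_K33.
Proof.
apply/group_setP; split; first by apply/Aut_K33P; exists false => x; rewrite perm1.
move=> g h /Aut_K33P[b gb] /Aut_K33P[c hc]; apply/Aut_K33P; exists (c (+) b) => x.
by rewrite permM hc gb addbA.
Qed.
Canonical Aut_K33_group := Group Aut_K33_group_set.

Section EdgeAction.

Variable g : {perm V}.
Hypothesis Ag : g \in Aut_K33.

Lemma is_edge_imset (e : E) : is_edge (g @: val e).
Proof.
have [b gb] := Aut_K33P g Ag.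
have /existsP[i /existsP[j /andP[/eqP -> oij]]] := valP e.
rewrite imsetU1 imset_set1; apply/existsP; exists (g i); apply/existsP; exists (g j).
by rewrite eqxx /= oddD !gb addbACA addbb -oddD.
Qed.

Lemma edge_actE (e : E) : val (edge_act g e) = g @: val e.
Proof. by rewrite /edge_act insubdK //; apply: is_edge_imset. Qed.

End EdgeAction.

Lemma edge_actM (g h : {perm V}) (e : E) : g \in Aut_K33 -> h \in Aut_K33 ->
  edge_act (g * h) e = edge_act h (edge_act g e).
Proof.
move=> Ag Ah; apply: val_inj; rewrite !edge_actE ?groupM // -imset_comp.
by apply: eq_imset => x; rewrite permM.
Qed.

Lemma edge_act1 (e : E) : edge_act 1 e = e.
Proof.
apply: val_inj; rewrite edge_actE ?group1 // -[RHS]imset_id.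
by apply: eq_imset => x; rewrite perm1.
Qed.

Lemma edge_actK (g : {perm V}) (e : E) :
  g \in Aut_K33 -> edge_act g^-1 (edge_act g e) = e.
Proof. by move=> Ag; rewrite -edge_actM ?groupV // mulgV edge_act1. Qed.

Lemma edge_actKV (g : {perm V}) (e : E) :
  g \in Aut_K33 -> edge_act g (edge_act g^-1 e) = e.
Proof. by move=> Ag; rewrite -edge_actM ?groupV // mulVg edge_act1. Qed.

Lemma is_edge_odd (x y : V) : odd (x + y) -> is_edge [set x; y].
Proof. by move=> oxy; apply/existsP; exists x; apply/existsP; exists y; rewrite eqxx. Qed.

(* Every vertex x is the only common vertex of its edges to x + 1 and x + 3. *)
Lemma perm_fixing_edges (g : {perm V}) :
  (forall e : E, g @: val e = val e) -> g = 1%g.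
Proof.
move=> fixE; apply/permP => x; rewrite perm1.
have nbr_fixed (k : V) : odd k -> g x \in [set x; (x + k)%R].
  move=> ok; have oxk : odd (x + (x + k)%R) by rewrite oddD oddZ6D addbA addbb ok.
  by have /= <- := fixE (Sub _ (is_edge_odd oxk)); rewrite imset_f ?set21.
case: (eqVneq (g x) x) => // gx_neq.
move: (nbr_fixed 1%R isT) (nbr_fixed 3%R isT).
by rewrite !inE (negPf gx_neq) /= => /eqP -> /eqP/addrI.
Qed.

Section Labellings.

Variable s : nat.

Definition lab_act (f : lab s) (g : {perm V}) : lab s :=
  if g \in Aut_K33 then [ffun e => f (edge_act g^-1 e)] else f.

Lemma lab_actE (f : lab s) (g : {perm V}) (e : E) :
  g \in Aut_K33 -> lab_act f g e = f (edge_act g^-1 e).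
Proof. by move=> Ag; rewrite /lab_act Ag ffunE. Qed.

Lemma lab_act_is_action : is_action Aut_K33 lab_act.
Proof.
split=> [g f1 f2|f g h Ag Ah].
  rewrite /lab_act; case: ifP => // Ag /ffunP eq12; apply/ffunP => e.
  by have := eq12 (edge_act g e); rewrite !ffunE edge_actK.
apply/ffunP => e; rewrite !lab_actE ?groupM ?groupV //.
by rewrite invMg edge_actM ?groupV.
Qed.
Canonical lab_action := Action lab_act_is_action.

Definition magic_distinct_labs : {set lab s} := [set f | magic_distinct f].

Lemma lab_act_magic_distinct (f : lab s) (g : {perm V}) : g \in Aut_K33 ->
  magic_distinct f -> magic_distinct (lab_act f g).
Proof.
move=> Ag /andP[/forallP magic_f /injectiveP inj_f]; apply/andP; split.
  apply/forallP => v.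
  rewrite (reindex_inj (h := edge_act g)); last first.
    by move=> e1 e2 /(congr1 (edge_act g^-1)); rewrite !edge_actK.
  rewrite (eq_big (fun e : E => (g^-1)%g v \in val e) (fun e : E => f e : nat))
    ?magic_f // => e.
    by rewrite edge_actE // -{1}(permKV g v) mem_imset //; apply: perm_inj.
  by rewrite lab_actE // edge_actK.
apply/injectiveP => e1 e2; rewrite !lab_actE // => /inj_f.
by move/(congr1 (edge_act g)); rewrite !edge_actKV.
Qed.

Lemma acts_magic_distinct : [acts Aut_K33, on magic_distinct_labs | lab_action].
Proof.
apply/subsetP => g Ag; rewrite in_setI Ag inE; apply/subsetP => f.
by rewrite !inE; apply: lab_act_magic_distinct.
Qed.

Lemma stab_magic_distinct (f : lab s) : f \in magic_distinct_labs ->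
  ('C_Aut_K33[f | lab_action])%g = 1%g.
Proof.
rewrite inE => /andP[_ /injectiveP inj_f].
apply/trivgP/subsetP => g /setIP[Ag /astab_act/(_ (set11 f)) /= fixf].
rewrite inE; apply/eqP/perm_fixing_edges => e; rewrite -edge_actE //; congr val.
by apply: inj_f; rewrite -[in LHS]fixf lab_actE // edge_actK.
Qed.

End Labellings.

Lemma card_free_action_orbits (aT : finGroupType) (D : {group aT}) (rT : finType)
    (to : action D rT) (S : {set rT}) (G : {group aT}) :
  [acts D, on S | to] -> {in S, forall x, ('C_D[x | to])%g = 1%g} -> G \subset D ->
  #|S| = (#|orbit to G @: S| * #|G|)%N.
Proof.
move=> actD freeD sGD; have actG : [acts G, on S | to] := subset_trans sGD actD.
apply: card_uniform_partition (orbit_partition actG) => _ /imsetP[x Sx ->].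
have Cx1 : ('C_G[x | to])%g = 1%g.
  by apply/trivgP; rewrite -(freeD x Sx) setSI.
by rewrite card_orbit_in // Cx1 indexg1.
Qed.

Lemma subZ6I (k : V) : injective (fun x : V => (k - x)%R).
Proof. by move=> x y /addrI /oppr_inj. Qed.

Definition rho (p : V * bool) : {perm V} :=
  if p.2 then perm (@addrI _ p.1) else perm (@subZ6I p.1).

Lemma rhoE (p : V * bool) (x : V) :
  rho p x = if p.2 then (p.1 + x)%R else (p.1 - x)%R.
Proof. by rewrite /rho; case: p.2; rewrite permE. Qed.

Lemma inD6P (g : {perm V}) : reflect (exists p, g = rho p) (g \in D6).
Proof.
rewrite inE; apply: (iffP existsP).
  move=> [k /orP[/forallP gk|/forallP gk]]; [exists (k, true)|exists (k, false)];
    by apply/permP => x; rewrite rhoE; apply/eqP: (gk x).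
move=> [[k b] ->]; exists k; case: b; apply/orP; [left|right];
  by apply/forallP => x; rewrite rhoE.
Qed.

Lemma D6_group_set : group_set D6.
Proof.
apply/group_setP; split.
  by apply/inD6P; exists (0%R, true); apply/permP => x; rewrite perm1 rhoE add0r.
move=> g h /inD6P[[k1 b1] ->] /inD6P[[k2 b2] ->]; apply/inD6P.
exists ((k2 + (if b2 then k1 else - k1))%R, if b2 then b1 else ~~ b1).
apply/permP => x; rewrite permM !rhoE /=.
by case: b1; case: b2 => /=; rewrite ?opprD ?opprK ?addrA.
Qed.
Canonical D6_group := Group D6_group_set.

Lemma rho_inj : injective rho.
Proof.
move=> [k1 b1] [k2 b2] eq_rho.
move: (congr1 (fun g : {perm V} => g 0%R) eq_rho).
move: (congr1 (fun g : {perm V} => g 1%R) eq_rho) => {eq_rho}.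
rewrite /= !rhoE /=; case: b1; case: b2; rewrite ?addr0 ?subr0 => + ek;
  by rewrite ek // => /addrI/eqP.
Qed.

Lemma card_D6 : #|D6| = 12.
Proof.
have -> : D6 = rho @: [set: V * bool].
  apply/setP => g; apply/inD6P/imsetP => [[p ->]|[p _ ->]]; last by exists p.
  by exists p.
by rewrite card_imset ?cardsT ?card_prod ?card_ord ?card_bool //; apply: rho_inj.
Qed.

Lemma D6_sub_Aut_K33 : D6 \subset Aut_K33.
Proof.
apply/subsetP => g /inD6P[[k b] ->]; apply/Aut_K33P; exists (odd k) => x.
by rewrite rhoE /=; case: b; rewrite ?oddZ6D ?oddZ6N.
Qed.

Lemma orbitD6E (s : nat) (f : lab s) : orbitD6 f = orbit (lab_action s) D6 f.
Proof.
apply/setP => h; apply/imsetP/imsetP => -[g Dg ->]; exists g^-1%g;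
  rewrite ?groupV //; apply/ffunP => e;
  by rewrite ffunE /= lab_actE ?groupV ?(subsetP D6_sub_Aut_K33) ?invgK ?ffunE.
Qed.

Lemma htildeE (s : nat) :
  htilde s = #|orbit (lab_action s) D6 @: magic_distinct_labs s|.
Proof.
apply: eq_card => O.
by apply/imsetP/imsetP => -[f Mf ->]; exists f; rewrite ?orbitD6E.
Qed.

Definition side (b : bool) : {set V} := [set x : V | odd x == b].

Lemma card_side (b : bool) : #|side b| = 3.
Proof. by case: b; rewrite -sum1_card big_mkcond !big_ord_recl big_ord0 !inE. Qed.

Definition Aut_sides : {set {perm V}} :=
  [set g : {perm V} | [forall x, odd (g x) == odd x]].

Lemma Aut_sidesP (g : {perm V}) :
  reflect (forall x, odd (g x) = odd x) (g \in Aut_sides).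
Proof. by rewrite inE; apply: (iffP forallP) => gx x; apply/eqP. Qed.

Lemma Aut_sides_group_set : group_set Aut_sides.
Proof.
apply/group_setP; split; first by apply/Aut_sidesP => x; rewrite perm1.
move=> g h /Aut_sidesP gx /Aut_sidesP hx; apply/Aut_sidesP => x.
by rewrite permM hx gx.
Qed.
Canonical Aut_sides_group := Group Aut_sides_group_set.

Lemma Sym_side_sub (b : bool) : Sym (side b) \subset Aut_sides.
Proof.
apply/subsetP => g; rewrite inE => on_g; apply/Aut_sidesP => x.
by have := perm_closed x on_g; rewrite !inE; case: b {on_g}; do 2!case: odd.
Qed.

Lemma dvdn_card_Aut_sides : 36 %| #|Aut_sides|.
Proof.
have disj : [disjoint side false & side true].
  by rewrite disjoints_subset; apply/subsetP => x; rewrite !inE => /eqP ->.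
have TI : Sym (side false) :&: Sym (side true) = 1%g.
  apply/trivgP/subsetP => g; rewrite !inE => /andP[onF onT].
  apply/eqP/permP => x; rewrite perm1.
  have [ox|ex] := boolP (odd x).
    by apply: (out_perm onF); rewrite inE ox.
  by apply: (out_perm onT); rewrite inE (negPf ex).
have commute_sides : commute (Sym (side false)) (Sym (side true)).
  apply: centC; apply/centsP => g; rewrite inE => onF h; rewrite inE => onT.
  exact: perm_onC onF onT disj.
have sub : (Sym (side false) <*> Sym (side true))%g \subset Aut_sides.
  by rewrite join_subG !Sym_side_sub.
by move: (cardSg sub); rewrite /= comm_joingE // TI_cardMg // !card_Sym !card_side.
Qed.

Definition side_swap : {perm V} := rho (1%R, false).

Lemma odd_side_swap (x : V) : odd (side_swap x) = ~~ odd x.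
Proof. by rewrite rhoE oddZ6D oddZ6N. Qed.

Lemma Aut_K33_cosets : Aut_K33 = Aut_sides :|: (side_swap *: Aut_sides)%g.
Proof.
have odd_swapV x : odd ((side_swap^-1)%g x) = ~~ odd x.
  by rewrite -{2}(permKV side_swap x) odd_side_swap negbK.
apply/setP => g; rewrite in_setU mem_lcoset.
apply/Aut_K33P/orP => [[[] gb]|[/Aut_sidesP gx|/Aut_sidesP gx]].
- by right; apply/Aut_sidesP => x; rewrite permM gb odd_swapV addTb negbK.
- by left; apply/Aut_sidesP => x; rewrite gb.
- by exists false.
exists true => x; have := gx (side_swap x).
by rewrite permM permK odd_side_swap => ->; case: odd.
Qed.

Lemma card_Aut_K33 : #|Aut_K33| = (2 * #|Aut_sides|)%N.
Proof.
rewrite Aut_K33_cosets cardsU card_lcoset.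
suff -> : Aut_sides :&: (side_swap *: Aut_sides)%g = set0.
  by rewrite cards0 subn0 addnn mul2n.
apply/setP => g; rewrite in_setI mem_lcoset in_set0.
apply/negP => /andP[/Aut_sidesP gx /Aut_sidesP/(_ (side_swap 0%R))].
by rewrite permM permK odd_side_swap gx.
Qed.

Lemma dvdn_card_Aut_K33 : 72 %| #|Aut_K33|.
Proof.
by rewrite card_Aut_K33 (_ : 72 = 2 * 36)%N // dvdn_pmul2l // dvdn_card_Aut_sides.
Qed.

Theorem mainTheorem8 : forall s : nat, 6 %| htilde s.
Proof.
move=> s.
have count := card_free_action_orbits (acts_magic_distinct s)
  (@stab_magic_distinct s).
have count_D6 := count _ D6_sub_Aut_K33.
have count_Aut := count _ (subxx Aut_K33).
rewrite card_D6 -htildeE in count_D6.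
have : 72 %| htilde s * 12.
  by rewrite -count_D6 count_Aut dvdn_mull // dvdn_card_Aut_K33.
by rewrite (_ : 72 = 6 * 12)%N // dvdn_pmul2r.
Qed.
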